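(* (i) The infinite fixed point beginning with $a$ of the morphism $a\to aba$, $b\to d$, $c\to b$, $d\to c$ is $2$-automatic. (ii) The infinite fixed point beginning with $a$ of the morphism $a\to aba$, $b\to c$, $c\to b$ is $2$-automatic; more precisely, cutting it into consecutive non-overlapping blocks of length $2$, only the blocks $ab$ and $ac$ occur, and coding $ab=0$, $ac=1$ the resulting sequence is the fixed point of $0\to 01$, $1\to 00$.
   Context: For an integer $q\ge 2$, a sequence is $q$-automatic if it is the image under a letter-to-letter map of a fixed point of a morphism all of whose letter-images have length $q$. *)

From mathcomp Require Import all_boot.
Set Implicit Arguments. Unset Strict Implicit. Unset Printing Implicit Defensive.

(* Infinite words over an alphabet A are functions nat -> A.
   A morphism is a map sigma : A -> seq A, extended to finite words by
   concatenation. *)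
Definition morph_word (A : Type) (sigma : A -> seq A) (w : seq A) : seq A :=
  flatten (map sigma w).

Definition prefix (A : Type) (x : nat -> A) (n : nat) : seq A := mkseq x n.

(* x is a fixed point of sigma: x = sigma(x), i.e. for every n, the image
   sigma(x_0 ... x_{n-1}) is a prefix of x.  (For non-erasing morphisms,
   which is the case for every morphism below, this is exactly x = sigma(x)
   since the images of the prefixes have unbounded length.) *)
Definition is_fixpoint (A : Type) (sigma : A -> seq A) (x : nat -> A) : Prop :=
  forall n i, i < size (morph_word sigma (prefix x n)) ->
    nth (x 0) (morph_word sigma (prefix x n)) i = x i.

(* q-automatic: image under a letter-to-letter map of a fixed point of a
   q-uniform morphism (on a finite alphabet). *)
Definition automatic (q : nat) (B : Type) (x : nat -> B) : Prop :=
  exists (C : finType) (tau : C -> seq C) (y : nat -> C) (f : C -> B),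
    (forall c, size (tau c) = q) /\ is_fixpoint tau y /\ (forall n, x n = f (y n)).

Inductive L4 : Type := a4 | b4 | c4 | d4.
Definition sigma4 (l : L4) : seq L4 :=
  match l with
  | a4 => [:: a4; b4; a4]
  | b4 => [:: d4]
  | c4 => [:: b4]
  | d4 => [:: c4]
  end.

Inductive L3 : Type := a3 | b3 | c3.
Definition sigma3 (l : L3) : seq L3 :=
  match l with
  | a3 => [:: a3; b3; a3]
  | b3 => [:: c3]
  | c3 => [:: b3]
  end.

(* The morphism 0 -> 01, 1 -> 00 on {0,1}, coded as false = 0, true = 1. *)
Definition mu01 (l : bool) : seq bool :=
  if l then [:: false; false] else [:: false; true].

(* Both morphisms of the theorem have the shape
     a -> a e a,   l -> r(l)  for every letter l <> a,
   where r maps the letters different from a to letters different from a and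
   e <> a.  For such a morphism the fixed point x starting with a is
   completely explicit: its even positions carry a and its odd positions
   carry the "ruler sequence"
     w(m) = r^k(e),   k = the 2-adic valuation of m + 1,
   which is the unique solution of  w(2n) = e,  w(2n+1) = r(w(n)). *)
From HB Require Import structures.
From Pilot Require Import Defs.
From mathcomp Require Import all_boot.
From mathcomp Require Import zify.
Set Implicit Arguments. Unset Strict Implicit.
Set Warnings "-notation-overridden,-redundant-canonical-projection".

Definition L4_code (l : L4) : bool * bool :=
  match l with
  | a4 => (false, false) | b4 => (false, true)
  | c4 => (true, false) | d4 => (true, true)
  end.
Definition L4_decode (p : bool * bool) : L4 :=
  match p with
  | (false, false) => a4 | (false, true) => b4
  | (true, false) => c4 | (true, true) => d4
  end.
Lemma L4_codeK : cancel L4_code L4_decode. Proof. by case. Qed.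
HB.instance Definition _ := Finite.copy L4 (can_type L4_codeK).

Definition L3_code (l : L3) : option bool :=
  match l with a3 => None | b3 => Some false | c3 => Some true end.
Definition L3_decode (p : option bool) : L3 :=
  match p with None => a3 | Some false => b3 | Some true => c3 end.
Lemma L3_codeK : cancel L3_code L3_decode. Proof. by case. Qed.
HB.instance Definition _ := Finite.copy L3 (can_type L3_codeK).

Lemma even_or_odd (m : nat) : exists n, m = 2 * n \/ m = (2 * n).+1.
Proof.
exists m./2; have := odd_double_half m; rewrite -mul2n.
by case: (odd m) => /= E; [right | left]; lia.
Qed.

Lemma odd_mul2 (n : nat) : odd (2 * n) = false.
Proof. by rewrite mul2n odd_double. Qed.

Lemma odd_mul2S (n : nat) : odd (2 * n).+1.
Proof. by rewrite /= odd_mul2. Qed.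

Lemma half_mul2 (n : nat) : (2 * n)./2 = n.
Proof. by rewrite mul2n doubleK. Qed.

Lemma half_mul2S (n : nat) : (2 * n).+1./2 = n.
Proof. by rewrite mul2n /= uphalf_double. Qed.

Section Ruler.
Variables (T : Type) (e : T) (r : T -> T).

Definition ruler (m : nat) : T := iter (logn 2 m.+1) r e.

Lemma ruler_even (n : nat) : ruler (2 * n) = e.
Proof.
rewrite /ruler lognE; case: ifP => // /and3P[_ _].
by rewrite dvdn2 /= mul2n odd_double.
Qed.

Lemma ruler_odd (n : nat) : ruler (2 * n).+1 = r (ruler n).
Proof.
rewrite /ruler; have -> : (2 * n).+2 = 2 * n.+1 by lia.
by rewrite lognE /= dvdn_mulr // mulKn.
Qed.

Definition ruler_rec (w : nat -> T) : Prop :=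
  forall n, w (2 * n) = e /\ w (2 * n).+1 = r (w n).

Lemma ruler_rec_unique (w : nat -> T) : ruler_rec w -> forall m, w m = ruler m.
Proof.
move=> Hw; elim/ltn_ind => m IH; have [n [Em | Em]] := even_or_odd m; subst m.
- by rewrite (Hw n).1 ruler_even.
- by rewrite (Hw n).2 ruler_odd IH //; lia.
Qed.

Lemma ruler_ind (P : T -> Prop) :
  P e -> (forall l, P l -> P (r l)) -> forall m, P (ruler m).
Proof. by move=> Pe Pr m; rewrite /ruler; elim: (logn _ _) => //= k; apply: Pr. Qed.

End Ruler.

Lemma ruler_map (T U : Type) (e : T) (r : T -> T) (r' : U -> U) (h : T -> U) :
  (forall l, h (r l) = r' (h l)) -> forall m, h (ruler e r m) = ruler (h e) r' m.
Proof.
by move=> hr m; rewrite /ruler; elim: (logn _ _) => //= k IH; rewrite hr IH.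
Qed.

Section FixedPoints.
Variables (A : Type) (sigma : A -> seq A).

Lemma morph_cat (s1 s2 : seq A) :
  morph_word sigma (s1 ++ s2) = morph_word sigma s1 ++ morph_word sigma s2.
Proof. by rewrite /morph_word map_cat flatten_cat. Qed.

Lemma morph_prefixS (x : nat -> A) (n : nat) :
  morph_word sigma (Defs.prefix x n.+1) = morph_word sigma (Defs.prefix x n) ++ sigma (x n).
Proof.
rewrite /Defs.prefix /mkseq -addn1 iotaD map_cat morph_cat.
by rewrite /morph_word /= cats0.
Qed.

(* The length of sigma(x_0 ... x_{n-1}), i.e. the position in sigma(x) where
   the image of the letter x_n starts. *)
Definition image_len (x : nat -> A) (n : nat) : nat :=
  size (morph_word sigma (Defs.prefix x n)).

Lemma image_lenS (x : nat -> A) (n : nat) :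
  image_len x n.+1 = image_len x n + size (sigma (x n)).
Proof. by rewrite /image_len morph_prefixS size_cat. Qed.

Lemma image_len_uniform (q : nat) (x : nat -> A) :
  (forall c, size (sigma c) = q) -> forall n, image_len x n = q * n.
Proof. by move=> Hq; elim=> [|n IH]; rewrite ?muln0 // image_lenS IH Hq mulnS addnC. Qed.

Lemma fixpoint_local (x : nat -> A) :
  is_fixpoint sigma x <->
  (forall n j, j < size (sigma (x n)) ->
     nth (x 0) (sigma (x n)) j = x (image_len x n + j)).
Proof.
split=> [Hx n j Hj | Hx n].
- have := Hx n.+1 (image_len x n + j).
  rewrite morph_prefixS size_cat nth_cat -/(image_len x n) ltn_add2l => /(_ Hj).
  by rewrite ltnNge leq_addr /= addKn.
- elim: n => [|n IH] i //.
  rewrite morph_prefixS size_cat nth_cat -/(image_len x n) => Hi.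
  case: ltnP => Hle; first exact: IH.
  by rewrite Hx ?subnKC //; lia.
Qed.

Lemma fixpoint_uniform (q : nat) (y : nat -> A) :
  (forall c, size (sigma c) = q) ->
  is_fixpoint sigma y <->
  (forall n j, j < q -> nth (y 0) (sigma (y n)) j = y (q * n + j)).
Proof.
move=> Hq; rewrite fixpoint_local.
have Hlen := image_len_uniform y Hq.
by split=> H n j; have := H n j; rewrite Hlen Hq.
Qed.

End FixedPoints.

Section InterleavedMorphism.
Variables (A : eqType) (sigma : A -> seq A) (a e : A) (r : A -> A).
Hypothesis sigma_a : sigma a = [:: a; e; a].
Hypothesis sigma_other : forall l, l != a -> sigma l = [:: r l].
Hypothesis r_other : forall l, l != a -> r l != a.
Hypothesis e_other : e != a.

Definition interleaves (x : nat -> A) : Prop :=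
  forall m, x (2 * m) = a /\ x (2 * m).+1 = ruler e r m.

Definition interleaving (m : nat) : A := if odd m then ruler e r m./2 else a.

Lemma interleaving_interleaves : interleaves interleaving.
Proof. by move=> m; rewrite /interleaving odd_mul2 odd_mul2S half_mul2S. Qed.

Lemma ruler_other (m : nat) : ruler e r m != a.
Proof. exact: (ruler_ind (P := fun l => l != a) e_other r_other). Qed.

(* While x is made of blocks (a, l) with l <> a, each block has an image of
   length 4. *)
Lemma image_len_blocks (x : nat -> A) (n : nat) :
  (forall k, k < n -> x (2 * k) = a /\ x (2 * k).+1 != a) ->
  image_len sigma x (2 * n) = 4 * n.
Proof.
elim: n => [|n IH] Hblocks; first by rewrite muln0.
have [Ha Hl] := Hblocks n (ltnSn n).
have -> : 2 * n.+1 = (2 * n).+2 by lia.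
rewrite !image_lenS IH => [|k Hk]; last by apply: Hblocks; lia.
by rewrite Ha sigma_a (sigma_other Hl) /=; lia.
Qed.

Section BlockImages.
Variables (x : nat -> A) (n : nat).
Hypothesis x_fix : is_fixpoint sigma x.
Hypothesis x_even : x (2 * n) = a.
Hypothesis image_at : image_len sigma x (2 * n) = 4 * n.

Lemma image_of_a :
  [/\ x (2 * (2 * n)) = a, x (2 * (2 * n)).+1 = e & x (2 * (2 * n).+1) = a].
Proof.
have /fixpoint_local Hloc := x_fix.
have Hj j : j < 3 -> x (4 * n + j) = nth (x 0) [:: a; e; a] j.
  by move=> Hj; rewrite -image_at -(Hloc (2 * n) j) x_even sigma_a.
split.
- have -> : 2 * (2 * n) = 4 * n + 0 by lia.
  by rewrite Hj.
- have -> : (2 * (2 * n)).+1 = 4 * n + 1 by lia.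
  by rewrite Hj.
- have -> : 2 * (2 * n).+1 = 4 * n + 2 by lia.
  by rewrite Hj.
Qed.

Lemma image_of_other :
  x (2 * n).+1 != a -> x (2 * (2 * n).+1).+1 = r (x (2 * n).+1).
Proof.
move=> Hl; have /fixpoint_local Hloc := x_fix.
have := Hloc (2 * n).+1 0; rewrite (sigma_other Hl) image_lenS image_at.
by rewrite x_even sigma_a /= => /(_ isT) ->; congr x; lia.
Qed.

End BlockImages.

Lemma fixpoint_blocks (x : nat -> A) :
  is_fixpoint sigma x -> x 0 = a -> forall m, x (2 * m) = a /\ x (2 * m).+1 != a.
Proof.
move=> x_fix x0; elim/ltn_ind => m IH.
have image_at n : n <= m -> image_len sigma x (2 * n) = 4 * n.
  by move=> Hn; apply: image_len_blocks => k Hk; apply: IH; lia.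
have [n [Em | Em]] := even_or_odd m; subst m.
- have x_even : x (2 * n) = a.
    have [-> | n_pos] := posnP n; first by rewrite muln0.
    by apply: (IH n _).1; lia.
  have [-> -> _] := image_of_a x_fix x_even (image_at n ltac:(lia)).
  by split.
- have [x_even x_odd] := IH n ltac:(lia).
  have at_n := image_at n ltac:(lia).
  have [_ _ ->] := image_of_a x_fix x_even at_n.
  by rewrite (image_of_other x_fix x_even at_n x_odd) r_other.
Qed.

(* Consequently a fixed point starting with a interleaves a with the ruler
   sequence, since its odd positions satisfy the ruler recursion. *)
Lemma fixpoint_interleaves (x : nat -> A) :
  is_fixpoint sigma x -> x 0 = a -> interleaves x.
Proof.
move=> x_fix x0; have blocks := fixpoint_blocks x_fix x0.
have image_at n : image_len sigma x (2 * n) = 4 * n.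
  by apply: image_len_blocks => k _; apply: blocks.
have odd_rec : ruler_rec e r (fun m => x (2 * m).+1).
  move=> n; have [x_even x_odd] := blocks n.
  have [_ -> _] := image_of_a x_fix x_even (image_at n).
  by rewrite (image_of_other x_fix x_even (image_at n) x_odd).
by move=> m; rewrite (blocks m).1 (ruler_rec_unique odd_rec).
Qed.

Lemma interleaves_fixpoint (x : nat -> A) : interleaves x -> is_fixpoint sigma x.
Proof.
move=> Hx; apply/fixpoint_local.
have image_at m : image_len sigma x (2 * m) = 4 * m.
  by apply: image_len_blocks => k _; rewrite (Hx k).1 (Hx k).2 ruler_other.
move=> n j; have [m [-> | ->]] := even_or_odd n.
- rewrite (Hx m).1 sigma_a image_at.
  case: j => [|[|[|j]]] //= _.
  + have -> : 4 * m + 0 = 2 * (2 * m) by lia.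
    by rewrite (Hx _).1.
  + have -> : 4 * m + 1 = (2 * (2 * m)).+1 by lia.
    by rewrite (Hx _).2 ruler_even.
  + have -> : 4 * m + 2 = 2 * (2 * m).+1 by lia.
    by rewrite (Hx _).1.
- rewrite (Hx m).2 (sigma_other (ruler_other m)) image_lenS image_at (Hx m).1 sigma_a.
  case: j => [|j] //= _.
  have -> : 4 * m + 3 + 0 = (2 * (2 * m).+1).+1 by lia.
  by rewrite (Hx _).2 ruler_odd.
Qed.

End InterleavedMorphism.

(* A sequence alternating a constant c with a letter-to-letter image of a
   ruler sequence over a finite set T is 2-automatic: it is the image of the
   fixed point  n |-> (n mod 2, w(n / 2))  of the 2-uniform morphism
   (b, l) -> (0, v) (1, v)  on bool * T, where v = r(l) if b = 1 and v = e
   otherwise (v is the value of w at the position of (b, l)). *)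
Lemma interleaving_automatic (T : finType) (B : Type) (e : T) (r : T -> T)
    (c : B) (g : T -> B) (x : nat -> B) :
  (forall m, x (2 * m) = c /\ x (2 * m).+1 = g (ruler e r m)) -> automatic 2 x.
Proof.
move=> Hx.
pose next (p : bool * T) : T := if p.1 then r p.2 else e.
pose tau (p : bool * T) : seq (bool * T) := [:: (false, next p); (true, next p)].
pose y (n : nat) : bool * T := (odd n, ruler e r n./2).
pose f (p : bool * T) : B := if p.1 then g p.2 else c.
have next_y n : next (y n) = ruler e r n.
  have [m [-> | ->]] := even_or_odd n; rewrite /next /y.
  - by rewrite odd_mul2 ruler_even.
  - by rewrite odd_mul2S half_mul2S ruler_odd.
exists (bool * T)%type, tau, y, f; split; first by []; split.
- apply/(fixpoint_uniform (q := 2)) => // n [|[|j]] // _.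
  + by rewrite /tau /= next_y /y addn0 odd_mul2 half_mul2.
  + by rewrite /tau /= next_y /y addn1 odd_mul2S half_mul2S.
- move=> n; have [m [-> | ->]] := even_or_odd n; rewrite /f /y.
  + by rewrite (Hx m).1 odd_mul2.
  + by rewrite (Hx m).2 odd_mul2S half_mul2S.
Qed.

Lemma ruler_negb_fixpoint : is_fixpoint mu01 (ruler false negb).
Proof.
apply/(fixpoint_uniform (q := 2)); first by case.
move=> n [|[|j]] // _.
- by rewrite addn0 ruler_even; case: (ruler _ _ n).
- by rewrite addn1 ruler_odd; case: (ruler _ _ n).
Qed.

(* The maps r of the two morphisms (their value at a is irrelevant). *)
Definition r4 (l : L4) : L4 :=
  match l with a4 => a4 | b4 => d4 | c4 => b4 | d4 => c4 end.
Definition r3 (l : L3) : L3 :=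
  match l with a3 => a3 | b3 => c3 | c3 => b3 end.

Lemma sigma4_other (l : L4) : l != a4 -> sigma4 l = [:: r4 l]. Proof. by case: l. Qed.
Lemma r4_other (l : L4) : l != a4 -> r4 l != a4. Proof. by case: l. Qed.
Lemma sigma3_other (l : L3) : l != a3 -> sigma3 l = [:: r3 l]. Proof. by case: l. Qed.
Lemma r3_other (l : L3) : l != a3 -> r3 l != a3. Proof. by case: l. Qed.

Definition code3 (z : bool) : L3 := if z then c3 else b3.

Lemma code3_negb (z : bool) : code3 (~~ z) = r3 (code3 z).
Proof. by case: z. Qed.

Theorem mainTheorem10 :
  (* (i) *)
  ((exists x : nat -> L4, is_fixpoint sigma4 x /\ x 0 = a4) /\
   (forall x : nat -> L4, is_fixpoint sigma4 x -> x 0 = a4 -> automatic 2 x))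
  /\
  (* (ii) *)
  ((exists x : nat -> L3, is_fixpoint sigma3 x /\ x 0 = a3) /\
   (forall x : nat -> L3, is_fixpoint sigma3 x -> x 0 = a3 ->
      automatic 2 x /\
      exists z : nat -> bool,
        is_fixpoint mu01 z /\
        (forall n, x (2 * n) = a3 /\
           ((x (2 * n).+1 = b3 /\ z n = false) \/
            (x (2 * n).+1 = c3 /\ z n = true))))).
Proof.
have fix4 := interleaves_fixpoint (erefl (sigma4 a4)) sigma4_other r4_other isT.
have shape4 := fixpoint_interleaves (erefl (sigma4 a4)) sigma4_other r4_other isT.
have fix3 := interleaves_fixpoint (erefl (sigma3 a3)) sigma3_other r3_other isT.
have shape3 := fixpoint_interleaves (erefl (sigma3 a3)) sigma3_other r3_other isT.
split; split.
- by exists (interleaving a4 b4 r4); split; [apply: fix4; apply: interleaving_interleaves |].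
- by move=> x x_fix x0; apply: (interleaving_automatic (g := id)); apply: shape4.
- by exists (interleaving a3 b3 r3); split; [apply: fix3; apply: interleaving_interleaves |].
- move=> x x_fix x0; have Hx := shape3 x x_fix x0.
  split; first exact: (interleaving_automatic (g := id) Hx).
  exists (ruler false negb); split; first exact: ruler_negb_fixpoint.
  move=> n; have [-> ->] := Hx n; split => //.
  have -> : ruler b3 r3 n = code3 (ruler false negb n) by rewrite (ruler_map false code3_negb).
  by case: (ruler _ _ n); [right | left].
Qed.
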